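(* Let $R$ be an exchange ring and $e_1,\dots,e_n\in R$ idempotents. Then there exists an idempotent $e\in e_1R+\cdots+e_nR$ such that $e_1R\subseteq eR$ and $e_iR$ is isomorphic to a direct summand of $eR$ for all $i$. In particular, $ReR=Re_1R+\cdots+Re_nR$.
   Context: All rings are unital and modules are right modules. A ring $R$ is an exchange ring if the right module $R_R$ has the finite exchange property: for every module $A$ and internal direct sum decompositions $A=M'\oplus N=A_1\oplus\cdots\oplus A_n$ with $M'\cong R_R$, there exist submodules $A_i'\subseteq A_i$ with $A=M'\oplus A_1'\oplus\cdots\oplus A_n'$ (equivalently: for every $a\in R$ there is an idempotent $e\in aR$ with $1-e\in(1-a)R$). *)

From HB Require Import structures.
From mathcomp Require Import all_boot all_order all_algebra.
Set Implicit Arguments. Unset Strict Implicit. Unset Printing Implicit Defensive.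
Import GRing.Theory.
Local Open Scope ring_scope.

(* Exchange ring, via the element-wise characterization given in the context:
   for every a there is an idempotent e in aR with 1 - e in (1 - a)R. *)
Definition exchange_ring (R : pzRingType) : Prop :=
  forall a : R, exists e : R,
    e * e = e /\ (exists r, e = a * r) /\ (exists s, 1 - e = (1 - a) * s).

Definition principal_right_ideal (R : pzRingType) (a : R) : R -> Prop :=
  fun x => exists r, x = a * r.

Definition sum_right_ideals (R : pzRingType) (n : nat) (e : 'I_n -> R) : R -> Prop :=
  fun x => exists r : 'I_n -> R, x = \sum_(i < n) e i * r i.

Definition twosided_ideal (R : pzRingType) (n : nat) (f : 'I_n -> R) : R -> Prop :=
  fun x => exists (m : nat) (a b : 'I_m -> R) (k : 'I_m -> 'I_n),
    x = \sum_(j < m) a j * f (k j) * b j.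

Definition is_submodule (R : pzRingType) (A : R -> Prop) : Prop :=
  A 0 /\ (forall x y, A x -> A y -> A (x + y)) /\ (forall x r, A x -> A (x * r)).

Definition module_iso (R : pzRingType) (M A : R -> Prop) (f : R -> R) : Prop :=
  (forall x, M x -> A (f x)) /\
  (forall x y, M x -> M y -> f (x + y) = f x + f y) /\
  (forall x r, M x -> f (x * r) = f x * r) /\
  (forall x y, M x -> M y -> f x = f y -> x = y) /\
  (forall z, A z -> exists x, M x /\ f x = z).

Definition iso_direct_summand (R : pzRingType) (M N : R -> Prop) : Prop :=
  exists (A B : R -> Prop),
    is_submodule A /\ is_submodule B /\
    (forall x, A x -> N x) /\ (forall x, B x -> N x) /\
    (forall x, N x -> exists a b, A a /\ B b /\ x = a + b) /\
    (forall x, A x -> B x -> x = 0) /\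
    exists f : R -> R, module_iso M A f.

(* For idempotents e, f write e ≲ f ([embeds e f]) when eR is isomorphic to
   a direct summand of fR, i.e. there are x ∈ fRe and y ∈ eRf with yx = e.
   The key step: for idempotents e1, e2 of an exchange ring there is an
   idempotent f ∈ e1R + e2R with fe1 = e1 and e2 ≲ f.  Exchange applied to
   1 - e2e1e2 splits e2 = p + q into orthogonal idempotents with
   p ∈ e2(1-e1)e2R and q ∈ e2e1e2R; moving p and q across these factorisations
   gives idempotents g with e1g = 0 and w ∈ e1R, and f = e1 + g(1 - e1) does
   the job.  Iterating this step over the e_i, starting from e_1 and using
   that ≲ is transitive, yields f; the ideal equality follows because
   f ∈ Σ e_iR and each e_i = yx ∈ RfR. *)
From HB Require Import structures.
From mathcomp Require Import all_boot all_order all_algebra.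
Import GRing.Theory.
Set Implicit Arguments. Unset Strict Implicit.
Local Open Scope ring_scope.

Definition embeds (R : pzRingType) (e f : R) : Prop :=
  exists x y, x = f * x * e /\ y = e * y * f /\ y * x = e.

Section Idempotents.
Variable R : pzRingType.
Implicit Types e f g p x y : R.

Lemma corner_mull f x e : f * f = f -> x = f * x * e -> f * x = x.
Proof. by move=> ff xE; rewrite {1}xE !mulrA ff -xE. Qed.

Lemma corner_mulr f x e : e * e = e -> x = f * x * e -> x * e = x.
Proof. by move=> ee xE; rewrite {1}xE -mulrA ee -xE. Qed.

Lemma idempotent_swap_factor a b p : p * p = p -> p = a * b -> p * a = p ->
  [/\ (b * p) * (b * p) = b * p, a * (b * p) = p & p * (b * p) = p].
Proof.
move=> pp pE pa.
have pbp : p * (b * p) = p by rewrite -{1}pa mulrA -(mulrA p) -pE !pp.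
by split; rewrite // ?(mulrA a) -?pE // -mulrA pbp.
Qed.

Lemma idempotent_join e g : e * e = e -> g * g = g -> e * g = 0 ->
  let f := e + g * (1 - e) in
  [/\ f * f = f, f * e = e, e * f = e, f * g = g & g * f = g].
Proof.
move=> ee gg eg f.
have fe : f * e = e by rewrite mulrDl -mulrA mulrBl mul1r ee subrr mulr0 addr0.
have ef : e * f = e by rewrite mulrDr mulrA eg mul0r addr0.
have fg : f * g = g.
  by rewrite mulrDl eg add0r -mulrA mulrBl mul1r eg subr0 gg.
have gf : g * f = g by rewrite mulrDr mulrA gg mulrBr mulr1 addrC subrK.
by split=> //; rewrite {2}/f mulrDr fe mulrA fg.
Qed.

Lemma embeds_of_absorb f f' : f * f = f -> f' * f' = f' -> f' * f = f ->
  embeds f f'.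
Proof.
move=> ff ff' f'f; exists f, (f * f').
split; [|split]; first by rewrite f'f ff.
  by rewrite !mulrA ff -mulrA ff'.
by rewrite -mulrA f'f ff.
Qed.

Lemma embeds_trans e f f' : e * e = e -> f * f = f -> f' * f' = f' ->
  embeds e f -> embeds f f' -> embeds e f'.
Proof.
move=> ee ff ff' [x [y [xE [yE yx]]]] [x' [y' [x'E [y'E y'x']]]].
exists (x' * x), (y * y'); split; [|split].
- by rewrite mulrA (corner_mull ff' x'E) -mulrA (corner_mulr ee xE).
- by rewrite !mulrA (corner_mull ee yE) -mulrA (corner_mulr ff' y'E).
- by rewrite mulrA -(mulrA y) y'x' (corner_mulr ff yE).
Qed.

End Idempotents.

Section Submodules.
Variables (R : pzRingType) (I : R -> Prop).
Hypothesis subI : is_submodule I.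

Lemma submoduleD x y : I x -> I y -> I (x + y).
Proof. by have [_ [addI _]] := subI; apply: addI. Qed.

Lemma submoduleMr x r : I x -> I (x * r).
Proof. by have [_ [_ mulI]] := subI; apply: mulI. Qed.

Lemma submoduleB x y : I x -> I y -> I (x - y).
Proof. by move=> Ix Iy; rewrite -(mulrN1 y); apply/submoduleD/submoduleMr. Qed.

End Submodules.

Lemma principal_right_ideal_submodule (R : pzRingType) (c : R) :
  is_submodule (principal_right_ideal c).
Proof.
split; first by exists 0; rewrite mulr0.
split; first by move=> _ _ [r ->] [s ->]; exists (r + s); rewrite mulrDr.
by move=> _ t [r ->]; exists (r * t); rewrite mulrA.
Qed.

Section Exchange.
Variable R : pzRingType.
Hypothesis exR : exchange_ring R.

(* The exchange property for 1 - c, cut down to the corner eRe. *)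
Lemma exchange_split_idempotent (e c : R) : e * e = e -> e * c = c ->
  exists p q r s, [/\ p * p = p, q * q = q, p * q = 0, p + q = e &
                      p = (e - c) * r * e /\ q = c * s * e].
Proof.
move=> ee ec; have [h [hh [[r hr] [s hs]]]] := exR (1 - c).
rewrite subKr in hs.
pose k := 1 - h.
have kk : k * k = k by rewrite /k mulrBl mul1r mulrBr mulr1 hh subrr subr0.
have ek : e * k = k by rewrite /k hs mulrA ec.
have pE : h * e = e - k * e by rewrite /k mulrBl mul1r subKr.
have pq : h * e * (k * e) = 0.
  by rewrite -mulrA (mulrA e) ek mulrA /k mulrBr mulr1 hh subrr mul0r.
exists (h * e), (k * e), r, s; split=> //.
- by rewrite {2}pE mulrBr pq subr0 -mulrA ee.
- by rewrite -mulrA (mulrA e) ek mulrA kk.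
- by rewrite pE subrK.
split; last by rewrite /k hs.
have ep : e * (h * e) = h * e by rewrite pE mulrBr ee mulrA ek.
by rewrite -ep hr !mulrA mulrBr mulr1 ec.
Qed.

Lemma exchange_absorb (I : R -> Prop) (e1 e2 : R) :
  is_submodule I -> I e1 -> I e2 -> e1 * e1 = e1 -> e2 * e2 = e2 ->
  exists f, [/\ f * f = f, I f, f * e1 = e1 & embeds e2 f].
Proof.
move=> subI Ie1 Ie2 ee1 ee2.
have e2c : e2 * (e2 * e1 * e2) = e2 * e1 * e2 by rewrite !mulrA ee2.
have [p [q [r [s [pp qq pq pqe [pE qE]]]]]] :=
  exchange_split_idempotent ee2 e2c.
have pe2 : p * e2 = p by rewrite pE -mulrA ee2.
have qe2 : q * e2 = q by rewrite qE -mulrA ee2.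
have pF : p = e2 * ((1 - e1) * (e2 * r * e2)).
  by rewrite pE !mulrA; congr (_ * _ * _); rewrite mulrBr mulr1 mulrBl ee2.
have qF : q = e2 * (e1 * (e2 * s * e2)) by rewrite qE !mulrA.
set b := (1 - e1) * _ in pF; set b' := e1 * _ in qF.
have [gg e2g _] := idempotent_swap_factor pp pF pe2.
have [ww e2w _] := idempotent_swap_factor qq qF qe2.
set g := b * p in gg e2g; set w := b' * q in ww e2w.
have e1g : e1 * g = 0 by rewrite /g /b !mulrA mulrBr mulr1 ee1 subrr !mul0r.
have e1w : e1 * w = w by rewrite /w /b' !mulrA ee1.
have ge2 : g * e2 = g by rewrite -mulrA pe2.
have we2 : w * e2 = w by rewrite -mulrA qe2.
have gw : g * w = 0 by rewrite /g -mulrA -pe2 -(mulrA p) e2w pq mulr0.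
have Ig : I g.
  rewrite /g /b -mulrA mulrBl mul1r.
  by apply: submoduleB => //; rewrite -!mulrA; apply: submoduleMr.
have [ff fe1 e1f fg gf] := idempotent_join ee1 gg e1g.
set f := e1 + _ in ff fe1 e1f fg gf.
have fw : f * w = w by rewrite -e1w mulrA fe1.
exists f; split=> //; first by apply: submoduleD => //; apply: submoduleMr.
(* g + w maps e2 R = pR + qR into gR + wR ⊆ fR. *)
exists (g + w), (e2 * (g + w * e1)); split; [|split].
- by rewrite mulrDr fg fw mulrDl ge2 we2.
- by rewrite mulrA ee2 -mulrA mulrDl gf -mulrA e1f.
have gwK : (g + w * e1) * (g + w) = g + w.
  rewrite mulrDl !mulrDr gg gw addr0 -!(mulrA w e1) e1g e1w.
  by rewrite mulr0 add0r ww.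
by rewrite -mulrA gwK mulrDr e2g e2w.
Qed.

Lemma exchange_absorb_seq (I : R -> Prop) (e0 : R) (s : seq R) :
  is_submodule I -> I e0 -> e0 * e0 = e0 ->
  (forall x, x \in s -> x * x = x /\ I x) ->
  exists f, [/\ f * f = f, I f, f * e0 = e0 & forall x, x \in s -> embeds x f].
Proof.
move=> subI Ie0 ee0; elim: s => [_ | a s IH sP].
  by exists e0; split.
have sPs x : x \in s -> x * x = x /\ I x.
  by move=> xs; apply: sP; rewrite in_cons xs orbT.
have [f [ff If fe0 embf]] := IH sPs.
have [aa Ia] := sP a (mem_head a s).
have [f' [ff' If' f'f emba]] := exchange_absorb subI If Ia ff aa.
exists f'; split=> //; first by rewrite -fe0 mulrA f'f.
move=> x; rewrite in_cons => /orP [/eqP -> // | xs].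
apply: embeds_trans (embf x xs) (embeds_of_absorb ff ff' f'f) => //.
exact: (sPs x xs).1.
Qed.

End Exchange.

Section Summands.
Variable R : pzRingType.

Lemma module_iso_mull (e x y : R) : e * e = e -> x * e = x -> e * y = y ->
  y * x = e ->
  module_iso (principal_right_ideal e) (principal_right_ideal (x * y)) ( *%R x).
Proof.
move=> ee xe ey yx; split.
  by move=> _ [r ->]; exists (x * r); rewrite !mulrA -(mulrA x y) yx.
split; first by move=> z z' _ _; rewrite mulrDr.
split; first by move=> z t _; rewrite mulrA.
split.
  have eK r : e * r = y * (x * (e * r)) by rewrite mulrA yx mulrA ee.
  by move=> _ _ [r ->] [t ->] xrt; rewrite eK (eK t) xrt.
move=> _ [r ->]; exists (y * r).
by split; [exists (y * r); rewrite mulrA ey | rewrite mulrA].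
Qed.

(* With u := xy, fR = uR ⊕ (f - u)R and z ↦ xz maps eR onto uR. *)
Lemma iso_direct_summand_of_embeds (e f : R) : e * e = e -> f * f = f ->
  embeds e f ->
  iso_direct_summand (principal_right_ideal e) (principal_right_ideal f).
Proof.
move=> ee ff [x [y [xE [yE yx]]]].
have fx := corner_mull ff xE; have xe := corner_mulr ee xE.
have ey := corner_mull ee yE; have yf := corner_mulr ff yE.
set u := x * y.
have uu : u * u = u by rewrite /u mulrA -(mulrA x y x) yx xe.
have fu : f * u = u by rewrite /u mulrA fx.
have uf : u * f = u by rewrite /u -mulrA yf.
exists (principal_right_ideal u), (principal_right_ideal (f - u)).
split; first exact: principal_right_ideal_submodule.
split; first exact: principal_right_ideal_submodule.
split; first by move=> _ [r ->]; exists (u * r); rewrite mulrA fu.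
split.
  by move=> _ [r ->]; exists ((f - u) * r); rewrite mulrA mulrBr ff fu.
split.
  move=> _ [r ->]; exists (u * r), ((f - u) * r).
  by split; [exists r | split; [exists r | rewrite -mulrDl addrC subrK]].
split.
  move=> z [r zE] [t zE']; have <- : u * z = z by rewrite zE mulrA uu.
  by rewrite zE' mulrA mulrBr uf uu subrr mul0r.
by exists ( *%R x); apply: module_iso_mull.
Qed.

End Summands.

Section Ideals.
Variables (R : pzRingType) (N : nat) (g : 'I_N -> R).

Lemma sum_right_ideals_submodule : is_submodule (sum_right_ideals g).
Proof.
split; first by exists (fun=> 0); rewrite big1 // => i _; rewrite mulr0.
split.
  move=> _ _ [r ->] [s ->]; exists (fun i => r i + s i).
  by rewrite -big_split; apply: eq_bigr => i _; rewrite mulrDr.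
move=> _ t [r ->]; exists (fun i => r i * t).
by rewrite mulr_suml; apply: eq_bigr => i _; rewrite mulrA.
Qed.

Lemma sum_right_ideals_gen i : sum_right_ideals g (g i).
Proof.
exists (fun j => (j == i)%:R).
rewrite (bigD1 i) //= eqxx mulr1 big1 ?addr0 // => j /negbTE ->.
by rewrite mulr0.
Qed.

Lemma twosided_ideal0 : twosided_ideal g 0.
Proof.
exists 0%N, (fun=> 0), (fun=> 0).
by exists (fun j : 'I_0 => False_rect _ (notF (ltn_ord j))); rewrite big_ord0.
Qed.

Lemma twosided_idealD x y :
  twosided_ideal g x -> twosided_ideal g y -> twosided_ideal g (x + y).
Proof.
move=> [m1 [a1 [b1 [k1 ->]]]] [m2 [a2 [b2 [k2 ->]]]].
pose glue T (u : 'I_m1 -> T) (v : 'I_m2 -> T) j :=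
  match split j with inl i => u i | inr i => v i end.
exists (m1 + m2)%N, (glue _ a1 a2), (glue _ b1 b2), (glue _ k1 k2).
rewrite big_split_ord /glue; congr (_ + _); apply: eq_bigr => i _.
  by rewrite (unsplitK (inl i)).
by rewrite (unsplitK (inr i)).
Qed.

Lemma twosided_idealMl c x : twosided_ideal g x -> twosided_ideal g (c * x).
Proof.
move=> [m [a [b [k ->]]]]; exists m, (fun j => c * a j), b, k.
by rewrite mulr_sumr; apply: eq_bigr => i _; rewrite !mulrA.
Qed.

Lemma twosided_idealMr c x : twosided_ideal g x -> twosided_ideal g (x * c).
Proof.
move=> [m [a [b [k ->]]]]; exists m, a, (fun j => b j * c), k.
by rewrite mulr_suml; apply: eq_bigr => i _; rewrite !mulrA.
Qed.

Lemma twosided_ideal_gen i : twosided_ideal g (g i).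
Proof.
exists 1%N, (fun=> 1), (fun=> 1), (fun=> i).
by rewrite big_ord1 mul1r mulr1.
Qed.

Lemma twosided_ideal_sum m (F : 'I_m -> R) :
  (forall j, twosided_ideal g (F j)) -> twosided_ideal g (\sum_(j < m) F j).
Proof.
move=> IF; apply: (big_ind (twosided_ideal g)) => //.
  exact: twosided_ideal0.
exact: twosided_idealD.
Qed.

Lemma twosided_ideal_of_sum_right_ideals x :
  sum_right_ideals g x -> twosided_ideal g x.
Proof.
move=> [r ->]; apply: twosided_ideal_sum => i.
exact/twosided_idealMr/twosided_ideal_gen.
Qed.

End Ideals.

Lemma twosided_ideal_sub (R : pzRingType) N M (g : 'I_N -> R) (h : 'I_M -> R) :
  (forall i, twosided_ideal h (g i)) ->
  forall x, twosided_ideal g x -> twosided_ideal h x.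
Proof.
move=> gh x [m [a [b [k ->]]]]; apply: twosided_ideal_sum => j.
exact/twosided_idealMr/twosided_idealMl.
Qed.

Lemma twosided_ideal_of_embeds (R : pzRingType) (e f : R) :
  f * f = f -> embeds e f -> twosided_ideal (fun _ : 'I_1 => f) e.
Proof.
move=> ff [x [y [xE [_ <-]]]]; rewrite -(corner_mull ff xE) mulrA.
exact/twosided_idealMr/twosided_idealMl/(twosided_ideal_gen _ ord0).
Qed.

Unset Implicit Arguments.
Theorem lemma2p1 (R : pzRingType) (n : nat) (e : 'I_n.+1 -> R) :
  exchange_ring R ->
  (forall i, e i * e i = e i) ->
  exists f : R,
    f * f = f /\
    sum_right_ideals e f /\
    (forall x, principal_right_ideal (e ord0) x -> principal_right_ideal f x) /\
    (forall i, iso_direct_summand (principal_right_ideal (e i))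
                                  (principal_right_ideal f)) /\
    (forall x, twosided_ideal (fun _ : 'I_1 => f) x <-> twosided_ideal e x).
Proof.
move=> exR idem.
have codom_idem x : x \in codom e -> x * x = x /\ sum_right_ideals e x.
  by move=> /codomP [i ->]; split; [exact: idem | exact: sum_right_ideals_gen].
have [f [ff Sf fe0 embf]] :=
  exchange_absorb_seq exR (sum_right_ideals_submodule e)
    (sum_right_ideals_gen e ord0) (idem ord0) codom_idem.
have embe i : embeds (e i) f := embf _ (codom_f e i).
exists f; split=> //; split=> //; split.
  by move=> _ [t ->]; exists (e ord0 * t); rewrite mulrA fe0.
split; first by move=> i; apply: iso_direct_summand_of_embeds.
move=> x; split; apply: twosided_ideal_sub => i.
  exact: twosided_ideal_of_sum_right_ideals.
exact: twosided_ideal_of_embeds.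
Qed.
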